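(* Let $n,k,m,r$ be positive integers. Then \begin{align*} r\,S_{\leq m}(n,k,r)&=\sum_{j=1}^{\min(m,\,n+2-k-r)}\binom{n}{j}S_{\leq m}(n-j,k,r-1),\\ n\,S_{\leq m}(n,k,r)&=\sum_{j=1}^{\min(m,\,n+2-k-r)}j\binom{n}{j}\Big[S_{\leq m}(n-j,k,r-1)+(k-1)S_{\leq m}(n-j,k-1,r)\Big], \end{align*} where the term $(k-1)S_{\leq m}(n-j,k-1,r)$ is $0$ when $k=1$.
   Context: For integers $N\ge 0$, $k\ge1$, $r\ge 0$, $m\ge1$, $S_{\leq m}(N,k,r)$ is the number of ways to partition $[N]=\{1,\dots,N\}$ into $r+k-1$ non-empty blocks, each of size at most $m$, where $r$ of the blocks receive the label $1$ (blocks with label $1$ are indistinguishable among themselves) and the remaining $k-1$ blocks receive the distinct labels $2,3,\dots,k$. *)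

From mathcomp Require Import all_boot.
Unset Printing Implicit Defensive.

(* The ground set [N] = {1..N} is modelled by 'I_N.
   A labelled partition is a pair (P, L) where P is a set partition of 'I_N
   (a set of nonempty pairwise-disjoint blocks covering 'I_N) and
   L assigns to each block a label in 'I_k; the label with value 0 stands
   for the paper's label 1, and value i (0 < i < k) for label i+1.
   L is normalised to 0 outside P so that it is determined by its values
   on the blocks. *)
Definition labelled_partition (N k r m : nat)
  (PL : {set {set 'I_N}} * {ffun {set 'I_N} -> 'I_k}) : bool :=
  let P := PL.1 in let L := PL.2 in
  [&& partition P [set: 'I_N],
      [forall B in P, #|B| <= m],
      #|P| == r + k - 1,
      [forall B, (B \notin P) ==> (val (L B) == 0)],
      #|[set B in P | val (L B) == 0]| == r &
      [forall i : 'I_k, (0 < val i) ==> (#|[set B in P | L B == i]| == 1)]].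

Definition Sle (m N k r : nat) : nat :=
  #|[set PL | @labelled_partition N k r m PL]|.

From mathcomp Require Import all_boot zify.

(* Double counting. Deleting a block B labelled 1 from a labelled partition
   of [n] leaves a labelled partition of [n] \ B with one block labelled 1
   fewer; deleting a block with a label i > 1 leaves one in which label i is
   unused, and renumbering the labels above i leaves k - 1 labels. Counting
   the pairs (partition, block labelled 1) gives the first identity; summing
   the block sizes, which add up to n, over all blocks gives the second. The
   number of labelled partitions of [n] \ B depends only on n - |B|, which
   produces the binomial coefficients. Both deletions stay within one family
   of counts once the ground set is an arbitrary finite set and each label i
   is required on an arbitrary number c i of blocks. *)

Set Implicit Arguments.
Unset Strict Implicit.

Local Notation lblocks T k := ({set {set T}} * {ffun {set T} -> 'I_k.+1})%type.

Section LabelledPartitions.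
Variables (T : finType) (m k : nat).
Implicit Types (A B C : {set T}) (P : {set {set T}}) (L : {ffun {set T} -> 'I_k.+1}).
Implicit Types (c : 'I_k.+1 -> nat) (b i : 'I_k.+1).

Definition lpart A c (PL : lblocks T k) : bool :=
  [&& partition PL.1 A, [forall B in PL.1, #|B| <= m],
      [forall B, (B \notin PL.1) ==> (PL.2 B == ord0)] &
      [forall i, #|[set B in PL.1 | PL.2 B == i]| == c i]].

Definition nlpart A c := #|[set PL | lpart A c PL]|.

Definition nlpart_at A c B b :=
  #|[set PL | [&& lpart A c PL, B \in PL.1 & PL.2 B == b]]|.

Definition candidate_block A B := [&& B != set0, B \subset A & #|B| <= m].

Lemma eq_lpart A c c' : c =1 c' -> lpart A c =1 lpart A c'.
Proof.
by move=> eq_c PL; rewrite /lpart (eq_forallb (fun i => congr1 _ (eq_c i))).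
Qed.

Lemma eq_nlpart A c c' : c =1 c' -> nlpart A c = nlpart A c'.
Proof. by move=> eq_c; apply: eq_card => PL; rewrite !inE (eq_lpart A eq_c). Qed.

Lemma lpart_candidate_block A c PL B :
  lpart A c PL -> B \in PL.1 -> candidate_block A B.
Proof.
case/and4P=> partP sizeP _ _ BP; rewrite /candidate_block (forall_inP sizeP) //.
by rewrite (partition_neq0 partP BP) (partitionS partP BP).
Qed.

Lemma partition_setU1 A B P : B != set0 -> B \subset A -> B \notin P ->
  partition (B |: P) A = partition P (A :\: B).
Proof.
move=> B0 sBA BnP; apply/idP/idP => [partBP | partP].
  by rewrite -(setU1K BnP) partitionD1 ?setU11.
have <- : B :|: A :\: B = A.
  by apply/setP=> x; rewrite !inE; case: (boolP (x \in B)) => // /(subsetP sBA).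
apply: partitionU1 => //; rewrite disjoints_subset; apply/subsetP => x xB.
by rewrite !inE xB.
Qed.

Lemma notin_partitionD A B P : B != set0 -> partition P (A :\: B) -> B \notin P.
Proof.
case/set0Pn=> x xB partP; apply/negP => /(partitionS partP)/subsetP/(_ x xB).
by rewrite inE xB.
Qed.

Definition relabel L B b := [ffun C => if C == B then b else L C].

Definition add_block B b (PL : lblocks T k) :=
  (B |: PL.1, relabel PL.2 B b).

Definition del_block B (PL : lblocks T k) :=
  (PL.1 :\ B, relabel PL.2 B ord0).

Lemma add_blockK B b P L : B \notin P -> L B = ord0 ->
  del_block B (add_block B b (P, L)) = (P, L).
Proof.
move=> BnP LB; rewrite /del_block /add_block /= setU1K //; congr pair; apply/ffunP => C.
by rewrite !ffunE; case: eqVneq => [->|].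
Qed.

Lemma del_blockK B b P L : B \in P -> L B = b ->
  add_block B b (del_block B (P, L)) = (P, L).
Proof.
move=> BP LB; rewrite /del_block /add_block /= setD1K //; congr pair; apply/ffunP => C.
by rewrite !ffunE; case: eqVneq => [->|].
Qed.

Lemma card_relabel_setU1 P L B b i : B \notin P ->
  #|[set C in B |: P | relabel L B b C == i]| = #|[set C in P | L C == i]| + (b == i).
Proof.
move=> BnP; set S := [set C in P | L C == i].
have -> : [set C in B |: P | relabel L B b C == i] = if b == i then B |: S else S.
  apply/setP => C; rewrite !inE ffunE; case: eqVneq => [->|CnB].
    by case: (b == i); rewrite ?inE ?eqxx // (negbTE BnP).
  by case: (b == i); rewrite ?inE ?(negbTE CnB).
case: (b == i); last by rewrite addn0.
by rewrite cardsU1 inE (negbTE BnP) addnC.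
Qed.

Lemma lpart_add_block A c c' B b P L :
  candidate_block A B -> B \notin P -> L B = ord0 -> (forall i, c' i = c i + (b == i)) ->
  lpart A c' (add_block B b (P, L)) = lpart (A :\: B) c (P, L).
Proof.
case/and3P=> B0 sBA Bm BnP LB eq_c'; rewrite /lpart /= partition_setU1 //.
congr [&& _, _, _ & _].
- apply/idP/idP => /forall_inP sizeP; apply/forall_inP => C CP.
    exact/sizeP/setU1r.
  by case/setU1P: CP => [->|/sizeP].
- apply: eq_forallb => C; rewrite !inE ffunE.
  by case: (eqVneq C B) => [->|] //=; rewrite LB eqxx implybT.
- by apply: eq_forallb => i; rewrite card_relabel_setU1 // eq_c' eqn_add2r.
Qed.

Lemma nlpart_at_block A c c' B b :
  candidate_block A B -> (forall i, c' i = c i + (b == i)) ->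
  nlpart_at A c' B b = nlpart (A :\: B) c.
Proof.
move=> candB eq_c'; have /and3P[B0 _ _] := candB.
have outside_B P L : lpart (A :\: B) c (P, L) -> B \notin P /\ L B = ord0.
  case/and4P=> /= partP _ /forallP normP _; have BnP := notin_partitionD B0 partP.
  by split; last exact/eqP/(implyP (normP B)).
rewrite /nlpart_at /nlpart -[RHS](card_in_imset (f := add_block B b)); last first.
  move=> [P1 L1] [P2 L2]; rewrite !inE.
  move=> /outside_B[BnP1 LB1] /outside_B[BnP2 LB2] eq12.
  by rewrite -(add_blockK b BnP1 LB1) eq12 add_blockK.
apply: eq_card => -[P L]; rewrite inE; apply/idP/imsetP => [|[[P' L'] lpPL' ->]].
  case/and3P=> lpPL BP /eqP LB; exists (del_block B (P, L)); last by rewrite del_blockK.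
  have LB0 : relabel L B ord0 B = ord0 by rewrite ffunE eqxx.
  by rewrite inE -(lpart_add_block candB _ LB0 eq_c') ?setD11 // del_blockK.
rewrite inE in lpPL'; have [BnP LB] := outside_B _ _ lpPL'.
by rewrite (lpart_add_block candB BnP LB eq_c') lpPL' setU11 ffunE !eqxx.
Qed.

Lemma sum_lpart_blocks A c b (w : {set T} -> nat) :
  \sum_(PL | lpart A c PL) \sum_(B in PL.1 | PL.2 B == b) w B
  = \sum_(B | candidate_block A B) w B * nlpart_at A c B b.
Proof.
rewrite (exchange_big_dep (candidate_block A)) => [|PL B lpPL /andP[BP _]]; last first.
  exact: lpart_candidate_block lpPL BP.
by apply: eq_bigr => B _; rewrite sum_nat_cond_const mulnC.
Qed.

End LabelledPartitions.

Lemma lift_eq0 n (i : 'I_n.+2) (j : 'I_n.+1) :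
  i != ord0 -> (lift i j == ord0) = (j == ord0).
Proof. by case: i j => [[|i] ?] [[|j] ?] //= _; rewrite -!val_eqE /= /bump addnS. Qed.

Section Relabelling.
Variables (T : finType) (m k : nat) (A : {set T}) (c : 'I_k.+2 -> nat) (i : 'I_k.+2).
Hypotheses (i_neq0 : i != ord0) (c_i : c i = 0).

Lemma lpart_lift P (L : {ffun {set T} -> 'I_k.+1}) :
  lpart m A c (P, [ffun C => lift i (L C)]) = lpart m A (c \o lift i) (P, L).
Proof.
rewrite /lpart /=; congr [&& _, _, _ & _].
  by apply: eq_forallb => C; rewrite ffunE lift_eq0.
have count_lift j : #|[set C in P | [ffun C => lift i (L C)] C == lift i j]|
                    = #|[set C in P | L C == j]|.
  by apply: eq_card => C; rewrite !inE ffunE (inj_eq (@lift_inj _ i)).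
have count_i : #|[set C in P | [ffun C => lift i (L C)] C == i]| = 0.
  by apply: eq_card0 => C; rewrite !inE ffunE eq_sym eq_liftF andbF.
apply/forallP/forallP => count j; first by rewrite -count_lift; exact: count.
by case: (unliftP i j) => [j' ->|->]; rewrite ?count_lift ?count_i ?c_i //; exact: count.
Qed.

Lemma nlpart_lift : nlpart m A c = nlpart m A (c \o lift i).
Proof.
pose g (PL : lblocks T k) := (PL.1, [ffun C => lift i (PL.2 C)]).
have g_inj : injective g.
  move=> [P1 L1] [P2 L2] [-> /ffunP eqL]; congr pair; apply/ffunP => C.
  by have := eqL C; rewrite !ffunE; apply: lift_inj.
rewrite /nlpart -(card_imset _ g_inj); apply: eq_card => -[P L]; rewrite inE.
apply/idP/imsetP => [lpPL | [[P' L'] + ->]]; last by rewrite !inE -lpart_lift.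
(* [c i = 0] and the default label is [ord0], so [L] never takes the value [i]. *)
have L_neq_i C : L C != i.
  case/and4P: lpPL => /= _ _ /forallP normP /forallP countP.
  case: (boolP (C \in P)) => [CP | /(implyP (normP C))/eqP ->]; last by rewrite eq_sym.
  apply: contraTneq (countP i) => LC; rewrite c_i cards_eq0; apply/set0Pn.
  by exists C; rewrite inE CP LC eqxx.
set L' := [ffun C => odflt ord0 (unlift i (L C))].
have gL : g (P, L') = (P, L).
  congr pair; apply/ffunP => C; rewrite !ffunE.
  by case: unliftP (L_neq_i C) => [j ->|->] //; rewrite eqxx.
exists (P, L'); last by rewrite gL.
by rewrite inE -lpart_lift; move: gL; rewrite /g /= => ->.
Qed.

End Relabelling.

Section Transport.
Variables (T T' : finType) (f : T -> T') (m k : nat) (A : {set T}) (c : 'I_k.+1 -> nat).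
Hypothesis f_inj : injective f.
Implicit Types (P : {set {set T}}) (L : {ffun {set T} -> 'I_k.+1}).

Let imset_f_inj : injective (fun B : {set T} => f @: B) := imset_inj f_inj.

Lemma preimset_imset (B : {set T}) : f @^-1: (f @: B) = B.
Proof. by apply/setP => x; rewrite inE mem_imset. Qed.

Lemma imset_preimset (B' : {set T'}) (D : {set T}) :
  B' \subset f @: D -> f @: (f @^-1: B') = B'.
Proof.
move=> /subsetP sB'D; apply/setP => y.
apply/imsetP/idP => [[x + ->]|yB']; first by rewrite inE.
by have /imsetP[x _ yfx] := sB'D y yB'; exists x; rewrite // inE -yfx.
Qed.

Definition imset_lpart (PL : lblocks T k) :=
  let P' := [set f @: (B : {set T}) | B in PL.1] in
  (P', [ffun B' => if B' \in P' then PL.2 (f @^-1: B') else ord0]).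

Definition preimset_lpart (PL' : lblocks T' k) :=
  ([set f @^-1: (B' : {set T'}) | B' in PL'.1], [ffun B : {set T} => PL'.2 (f @: B)]).

Lemma lpart_imset P L : [forall B, (B \notin P) ==> (L B == ord0)] ->
  lpart m (f @: A) c (imset_lpart (P, L)) = lpart m A c (P, L).
Proof.
move=> normP; rewrite /lpart /= imset_partition // normP.
have count_imset (q : pred 'I_k.+1) :
    #|[set B' in [set f @: (B : {set T}) | B in P] | q ((imset_lpart (P, L)).2 B')]|
    = #|[set B in P | q (L B)]|.
  rewrite -(card_imset _ imset_f_inj); apply: eq_card => B'; rewrite !inE ffunE.
  apply/andP/imsetP => [[/imsetP[B BP ->]] | [B]]; rewrite ?inE.
    by rewrite imset_f // preimset_imset => qB; exists B; rewrite ?inE ?BP.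
  by case/andP=> BP qB ->; rewrite imset_f // preimset_imset.
congr [&& _, _, _ & _].
- apply/forall_inP/forall_inP => sizeP B BP; last first.
    by case/imsetP: BP => B0 B0P ->; rewrite card_imset //; apply: sizeP.
  by have := sizeP _ (imset_f _ BP); rewrite card_imset.
- by apply/forallP => B'; apply/implyP; rewrite ffunE => /negbTE ->.
- by apply: eq_forallb => i; rewrite (count_imset (pred1 i)).
Qed.

Lemma preimset_lpartK PL : lpart m A c PL -> preimset_lpart (imset_lpart PL) = PL.
Proof.
case: PL => P L /and4P[/= partP _ /forallP normP _]; congr pair.
  by rewrite /= -imset_comp -[RHS]imset_id; apply: eq_imset => B; apply: preimset_imset.
apply/ffunP => B; rewrite !ffunE /=; case: ifPn => [_|fBnP]; first by rewrite preimset_imset.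
have BnP : B \notin P by apply: contra fBnP => BP; apply: imset_f.
by rewrite (eqP (implyP (normP B) BnP)).
Qed.

Lemma imset_lpartK PL' : lpart m (f @: A) c PL' -> imset_lpart (preimset_lpart PL') = PL'.
Proof.
case: PL' => P' L' /and4P[/= partP _ /forallP normP _].
have imset_blocks :
    [set f @: (B : {set T}) | B in [set f @^-1: (B' : {set T'}) | B' in P']] = P'.
  rewrite -imset_comp -[RHS]imset_id; apply: eq_in_imset => B' B'P' /=.
  exact: imset_preimset (partitionS partP B'P').
rewrite /imset_lpart /= imset_blocks; congr pair; apply/ffunP => B'; rewrite !ffunE.
case: ifPn => [B'P' | B'nP']; first by rewrite (imset_preimset (partitionS partP B'P')).
by apply/esym/eqP/(implyP (normP _)).
Qed.

Lemma nlpart_imset : nlpart m (f @: A) c = nlpart m A c.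
Proof.
rewrite /nlpart -[RHS](card_in_imset (f := imset_lpart)); last first.
  by apply: (can_in_inj (g := preimset_lpart)) => PL; rewrite inE; apply: preimset_lpartK.
apply: eq_card => PL'; rewrite inE; apply/idP/imsetP => [lpPL' | [[P L] + ->]].
  exists (preimset_lpart PL'); last by rewrite imset_lpartK.
  rewrite inE -lpart_imset ?imset_lpartK //.
  case: PL' lpPL' => P' L' /and4P[_ _ /forallP normP _]; apply/forallP => B /=.
  rewrite ffunE; apply/implyP => BnP; apply: (implyP (normP _)).
  by apply: contra BnP => fBP; apply/imsetP; exists (f @: B); rewrite ?preimset_imset.
by rewrite inE => lpPL; rewrite lpart_imset //; case/and4P: lpPL.
Qed.

End Transport.

Definition label_mult k r (i : 'I_k.+1) : nat := if i == ord0 then r else 1.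
Arguments label_mult {k}.

Lemma label_multS k r (i : 'I_k.+1) : label_mult r.+1 i = label_mult r i + (ord0 == i).
Proof. by rewrite /label_mult eq_sym; case: eqP; rewrite ?addn1 ?addn0. Qed.

Section DoubleCounting.
Variables (T : finType) (m k : nat) (A : {set T}) (r : nat).

Lemma nlpart_rec_label0 :
  r.+1 * nlpart m A (label_mult (k := k) r.+1)
  = \sum_(B | candidate_block m A B) nlpart m (A :\: B) (label_mult (k := k) r).
Proof.
transitivity (\sum_(PL | lpart m A (label_mult (k := k) r.+1) PL)
                \sum_(B in PL.1 | PL.2 B == ord0) 1).
  rewrite mulnC -sum_nat_cond_const; apply: eq_bigr => PL.
  by case/and4P=> _ _ _ /forallP/(_ ord0)/eqP; rewrite sum_nat_cond_const muln1 => ->.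
rewrite sum_lpart_blocks; apply: eq_bigr => B candB.
by rewrite mul1n (nlpart_at_block candB (label_multS r)).
Qed.

Lemma sum_nlpart_at_labels B : candidate_block m A B ->
  \sum_(i : 'I_k.+1) nlpart_at m A (label_mult r.+1) B i
  = nlpart m (A :\: B) (label_mult (k := k) r)
    + k * nlpart m (k := k.-1) (A :\: B) (label_mult r.+1).
Proof.
move=> candB; rewrite big_ord_recl (nlpart_at_block candB (label_multS r)).
congr (_ + _); case: k => [|k']; first by rewrite big_ord0.
rewrite (eq_bigr (fun=> nlpart m (A :\: B) (label_mult (k := k') r.+1))).
  by rewrite sum_nat_const card_ord.
move=> j _.
set i := lift ord0 j; have iN0 : i != ord0 by rewrite eq_sym neq_lift.
pose c l := if l == i then 0 else label_mult r.+1 l.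
rewrite (nlpart_at_block (c := c) candB) => [|l]; last first.
  by rewrite /c /label_mult eq_sym; case: (eqVneq l i) => [->|]; rewrite ?(negbTE iN0) ?addn0.
rewrite (nlpart_lift _ _ iN0) /c ?eqxx //; apply: eq_nlpart => l /=.
by rewrite eq_sym eq_liftF /label_mult lift_eq0.
Qed.

Lemma nlpart_rec_card :
  #|A| * nlpart m A (label_mult (k := k) r.+1)
  = \sum_(B | candidate_block m A B)
      #|B| * (nlpart m (A :\: B) (label_mult (k := k) r)
              + k * nlpart m (k := k.-1) (A :\: B) (label_mult r.+1)).
Proof.
transitivity (\sum_(PL | lpart m A (label_mult (k := k) r.+1) PL)
                \sum_(i : 'I_k.+1) \sum_(B in PL.1 | PL.2 B == i) #|B|).
  rewrite mulnC -sum_nat_cond_const; apply: eq_bigr => PL.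
  by case/and4P=> partP _ _ _; rewrite (card_partition partP) (partition_big PL.2 predT).
rewrite exchange_big /=; under eq_bigr do rewrite sum_lpart_blocks.
rewrite exchange_big /=; apply: eq_bigr => B candB.
by rewrite -big_distrr /= sum_nlpart_at_labels.
Qed.

End DoubleCounting.

Lemma nlpart_ord (T : finType) m k (A : {set T}) (c : 'I_k.+1 -> nat) :
  nlpart m A c = nlpart m [set: 'I_#|A|] c.
Proof.
rewrite -(nlpart_imset m _ c (@enum_val_inj _ (mem A))); congr nlpart.
apply/setP => x; apply/idP/imsetP => [xA|[y _ ->]]; last exact: enum_valP.
by exists (enum_rank_in xA x); rewrite ?inE ?enum_rankK_in.
Qed.

Lemma nlpart_setTD n m k (B : {set 'I_n}) (c : 'I_k.+1 -> nat) :
  nlpart m ([set: 'I_n] :\: B) c = nlpart m [set: 'I_(n - #|B|)] c.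
Proof.
have cardD : #|[set: 'I_n] :\: B| = n - #|B|.
  by have := cardsC B; rewrite setTD card_ord; lia.
by rewrite nlpart_ord cardD.
Qed.

Lemma Sle_nlpart m N k r :
  Sle m N k.+1 r = nlpart m [set: 'I_N] (label_mult (k := k) r).
Proof.
apply: eq_card => -[P L]; rewrite !inE /labelled_partition /lpart /=.
case partP: (partition P _) => //=; case: [forall B in P, #|B| <= m] => //=.
set count := fun i => #|[set B in P | L B == i]|.
have countsE : [forall i, count i == label_mult r i]
               = (count ord0 == r) && [forall i : 'I_k.+1, (0 < i) ==> (count i == 1)].
  apply/forallP/andP => [counts | [count0 /forallP counts] i].
    split; first exact: counts ord0.
    apply/forallP => i; apply/implyP => i0; have := counts i.
    by case: (eqVneq i ord0) i0 => [->|iN0 _] //; rewrite /label_mult (negbTE iN0).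
  rewrite /label_mult; case: (eqVneq i ord0) => [->|iN0] //.
  by apply: (implyP (counts i)); rewrite lt0n.
have cardP : count ord0 == r -> [forall i : 'I_k.+1, (0 < i) ==> (count i == 1)] ->
             #|P| = r + k.
  move=> /eqP count0 /forallP counts.
  rewrite -sum1_card (partition_big L predT) //= big_ord_recl.
  rewrite sum_nat_cond_const muln1 -/(count ord0) count0; congr (_ + _).
  rewrite -[k in RHS]card_ord -sum1_card; apply: eq_bigr => j _.
  by rewrite sum_nat_cond_const muln1; apply/eqP/(implyP (counts _)).
rewrite countsE subn1 addnS /=.
apply/and4P/and3P => [[_ norm count0 counts] | [norm count0 counts]]; first by split.
by split; rewrite // cardP.
Qed.

Lemma muln_Sle_nlpart m N k r :
  k * Sle m N k r = k * nlpart m (k := k.-1) [set: 'I_N] (label_mult r).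
Proof. by case: k => // k; rewrite Sle_nlpart. Qed.

Lemma Sle_small m N k r : N < r + k - 1 -> Sle m N k r = 0.
Proof.
move=> N_small; apply: eq_card0 => -[P L]; rewrite !inE.
apply/negP => /and4P[/= partP _ /eqP cardP _].
have : #|P| <= #|[set: 'I_N]|.
  rewrite (card_partition partP) -sum1_card.
  by apply: leq_sum => B BP; rewrite card_gt0 (partition_neq0 partP BP).
by rewrite cardsT card_ord cardP leqNgt N_small.
Qed.

Lemma sum_set_card (T : finType) (p : pred nat) (F : nat -> nat) :
  \sum_(B : {set T} | p #|B|) F #|B| = \sum_(j < #|T|.+1 | p j) 'C(#|T|, j) * F j.
Proof.
have card_lt (B : {set T}) : #|B| < #|T|.+1 by rewrite ltnS; apply: max_card.
rewrite (partition_big (fun B : {set T} => inord #|B| : 'I_#|T|.+1) p) => [|B].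
  2: by rewrite inordK.
apply: eq_bigr => j pj; rewrite (eq_bigr (fun=> F j)) => [|B /andP[_ /eqP <-]]; last first.
  by rewrite inordK.
rewrite sum_nat_cond_const -card_draws; congr (_ * _); apply: eq_card => B; rewrite !inE.
apply/andP/eqP => [[_ /eqP <-]|Bj]; first by rewrite inordK.
have -> : inord #|B| = j by apply: val_inj; rewrite /= inordK Bj.
by rewrite Bj.
Qed.

Lemma sum_window n m U (t : nat -> nat) :
  U <= n -> (forall j, U < j <= n -> t j = 0) ->
  \sum_(j < n.+1 | 0 < j <= m) t j = \sum_(1 <= j < (minn m U).+1) t j.
Proof.
move=> Un t0; rewrite big_mkcond -(big_mkord predT (fun j => if 0 < j <= m then t j else 0)).
have bound : (minn m U).+1 <= n.+1 by rewrite ltnS geq_min Un orbT.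
rewrite (big_cat_nat (n := (minn m U).+1) (leq0n _) bound) /=.
rewrite [X in _ + X]big_nat_cond [X in _ + X]big1 ?addn0 => [|j]; last first.
  move=> /andP[/andP[jU jn] _]; case: ifP => // /andP[_ jm].
  by apply: t0; apply/andP; split; lia.
rewrite big_ltn // /= add0n; apply: eq_big_nat => j /andP[j0 jU].
have jm : j <= m by lia.
by rewrite j0 jm.
Qed.

Lemma sum_candidate_blocks n m U (F : nat -> nat) :
  U <= n -> (forall j, U < j <= n -> F j = 0) ->
  \sum_(B | candidate_block m [set: 'I_n] B) F #|B|
  = \sum_(1 <= j < (minn m U).+1) 'C(n, j) * F j.
Proof.
move=> Un F0; rewrite (eq_bigl (fun B : {set 'I_n} => 0 < #|B| <= m)) => [|B]; last first.
  by rewrite /candidate_block subsetT card_gt0.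
rewrite (sum_set_card _ (fun j => 0 < j <= m)) card_ord.
by apply: sum_window => // j /F0 ->; rewrite muln0.
Qed.

Theorem mainTheorem5 (n k m r : nat) :
  0 < n -> 0 < k -> 0 < m -> 0 < r ->
  r * Sle m n k r =
    \sum_(1 <= j < (minn m (n + 2 - k - r)).+1) 'C(n, j) * Sle m (n - j) k r.-1
  /\
  n * Sle m n k r =
    \sum_(1 <= j < (minn m (n + 2 - k - r)).+1)
       j * 'C(n, j) * (Sle m (n - j) k r.-1 + (k - 1) * Sle m (n - j) k.-1 r).
Proof.
move=> _ k_gt0 _ r_gt0; case: k k_gt0 => // k _; case: r r_gt0 => // r _.
have Un : n + 2 - k.+1 - r.+1 <= n by lia.
have vanish j : n + 2 - k.+1 - r.+1 < j <= n ->
    Sle m (n - j) k.+1 r = 0 /\ Sle m (n - j) k r.+1 = 0.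
  by move=> /andP[jU jn]; split; apply: Sle_small; lia.
rewrite subn1 /=; split.
  rewrite Sle_nlpart nlpart_rec_label0.
  under eq_bigr do rewrite nlpart_setTD -Sle_nlpart.
  by apply: sum_candidate_blocks => // j /vanish[-> _].
rewrite -[n in n * _](card_ord n) -cardsT Sle_nlpart nlpart_rec_card.
under eq_bigr do rewrite !nlpart_setTD -muln_Sle_nlpart -Sle_nlpart.
rewrite (@sum_candidate_blocks _ _ _
           (fun j => j * (Sle m (n - j) k.+1 r + k * Sle m (n - j) k r.+1)) Un).
  by apply: eq_bigr => j _; rewrite mulnCA mulnA.
by move=> j /vanish[-> ->]; rewrite muln0 addn0 muln0.
Qed.
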